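(* For every message $M$ and formulas $\phi,\psi$: $\vdash[M]\big([M](\phi\vee\psi)\to([M]\phi\vee[M]\psi)\big)$.
   Context: Fix a finite set $\mathcal{A}$ of agent names containing a distinguished name $\mathsf{CM}$. Messages: $M ::= a \mid B \mid (M,M)$ ($a\in\mathcal{A}$, $B$ optional data constants, pairs). $\mathcal{P}$ is a denumerable set of propositional variables containing atoms $\mathsf{k}_a(M)$ (''$a$ knows $M$''). Formulas: $\phi ::= P \mid \phi\wedge\phi \mid \phi\vee\phi \mid \neg\phi \mid \phi\to\phi \mid [M]\phi$. Abbreviations: $\mathrm{true}:=\mathsf{k}_{\mathsf{CM}}(\mathsf{CM})$, $\mathrm{false}:=\neg\mathrm{true}$, $\phi\leftrightarrow\psi:=(\phi\to\psi)\wedge(\psi\to\phi)$, $\langle M\rangle\phi:=\neg\neg(\mathsf{k}_{\mathsf{CM}}(M)\wedge\phi)$. LIiP is the smallest set of formulas containing all instances of: the axioms of an adequate Hilbert axiomatization of intuitionistic propositional logic; $\mathsf{k}_a(a)$; $(\mathsf{k}_a(M)\wedge\mathsf{k}_a(M'))\leftrightarrow\mathsf{k}_a((M,M'))$; $[M]\mathsf{k}_{\mathsf{CM}}(M)$; $[M](\phi\to\psi)\to([M]\phi\to[M]\psi)$; $[M]\phi\to(\mathsf{k}_{\mathsf{CM}}(M)\to\phi)$; $[M]\phi\to\langle M\rangle\phi$; $\phi\to[M]\phi$; and closed under modus ponens and the rule: if $\mathsf{k}_{\mathsf{CM}}(M)\to\mathsf{k}_{\mathsf{CM}}(M')$ is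 in the set then so is $[M']\phi\to[M]\phi$ for every $\phi$. Write $\vdash\phi$ for $\phi\in\mathrm{LIiP}$. *)

From mathcomp Require Import all_boot.
Set Implicit Arguments. Unset Strict Implicit.

Inductive msg (A : Type) (B : Type) : Type :=
| MAgent : A -> msg A B
| MData  : B -> msg A B
| MPair  : msg A B -> msg A B -> msg A B.

Inductive pvar (A B : Type) : Type :=
| Know : A -> msg A B -> pvar A B
| PV   : nat -> pvar A B.

Inductive form (A B : Type) : Type :=
| Var : pvar A B -> form A B
| And : form A B -> form A B -> form A B
| Or  : form A B -> form A B -> form A B
| Not : form A B -> form A B
| Imp : form A B -> form A B -> form A B
| Box : msg A B -> form A B -> form A B.

Arguments Var {A B}. Arguments And {A B}. Arguments Or {A B}.
Arguments Not {A B}. Arguments Imp {A B}. Arguments Box {A B}.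

Definition kn {A B : Type} (a : A) (M : msg A B) : form A B := Var (Know a M).
Definition Iff {A B : Type} (p q : form A B) : form A B := And (Imp p q) (Imp q p).
Definition Dia {A B : Type} (CM : A) (M : msg A B) (p : form A B) : form A B :=
  Not (Not (And (kn CM M) p)).

(* Intuitionistic propositional logic is given by a standard
   (Kleene-style) Hilbert axiomatization with primitive negation. *)
Inductive LIiP (A : finType) (CM : A) (B : Type) : form A B -> Prop :=
| ax_K  p q : LIiP CM (Imp p (Imp q p))
| ax_S  p q r : LIiP CM (Imp (Imp p (Imp q r)) (Imp (Imp p q) (Imp p r)))
| ax_andE1 p q : LIiP CM (Imp (And p q) p)
| ax_andE2 p q : LIiP CM (Imp (And p q) q)
| ax_andI p q : LIiP CM (Imp p (Imp q (And p q)))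
| ax_orI1 p q : LIiP CM (Imp p (Or p q))
| ax_orI2 p q : LIiP CM (Imp q (Or p q))
| ax_orE p q r : LIiP CM (Imp (Imp p r) (Imp (Imp q r) (Imp (Or p q) r)))
| ax_notI p q : LIiP CM (Imp (Imp p q) (Imp (Imp p (Not q)) (Not p)))
| ax_efq p q : LIiP CM (Imp (Not p) (Imp p q))
| ax_self (a : A) : LIiP CM (kn a (MAgent B a))
| ax_pair (a : A) M M' : LIiP CM (Iff (And (kn a M) (kn a M')) (kn a (MPair M M')))
| ax_Mk M : LIiP CM (Box M (kn CM M))
| ax_MK M p q : LIiP CM (Imp (Box M (Imp p q)) (Imp (Box M p) (Box M q)))
| ax_MT M p : LIiP CM (Imp (Box M p) (Imp (kn CM M) p))
| ax_MD M p : LIiP CM (Imp (Box M p) (Dia CM M p))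
| ax_M4 M p : LIiP CM (Imp p (Box M p))
| r_MP p q : LIiP CM (Imp p q) -> LIiP CM p -> LIiP CM q
| r_mono M M' p : LIiP CM (Imp (kn CM M) (kn CM M')) ->
                  LIiP CM (Imp (Box M' p) (Box M p)).

From mathcomp Require Import all_boot.

Set Implicit Arguments.

(* Under the hypothesis k_CM(M), axiom T turns [M](phi \/ psi) into
   phi \/ psi, and axiom 4 turns each disjunct into its boxed form.  Hence
   k_CM(M) -> ([M](phi \/ psi) -> [M]phi \/ [M]psi) is a theorem, and any
   theorem of the form k_CM(M) -> chi can be boxed, because [M]k_CM(M) is an
   axiom and [M] distributes over implication. *)

Section Hilbert.
Variables (A : finType) (CM : A) (B : Type).
Local Notation prov := (@LIiP A CM B).

Lemma imp_weaken p q : prov q -> prov (Imp p q).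
Proof. exact: r_MP (ax_K _ _ _). Qed.

Lemma imp_mp p q r : prov (Imp p (Imp q r)) -> prov (Imp p q) -> prov (Imp p r).
Proof. by move=> pqr pq; apply: r_MP (r_MP (ax_S _ _ _ _) pqr) pq. Qed.

Lemma imp_trans p q r : prov (Imp p q) -> prov (Imp q r) -> prov (Imp p r).
Proof. by move=> pq qr; apply: imp_mp (imp_weaken p qr) pq. Qed.

Lemma imp_swap p q r : prov (Imp p (Imp q r)) -> prov (Imp q (Imp p r)).
Proof.
move=> pqr; apply: imp_mp _ (ax_K _ q p).
exact: imp_mp (imp_weaken q (ax_S _ p q r)) (imp_weaken q pqr).
Qed.

Lemma imp2_trans p q r s :
  prov (Imp p (Imp q r)) -> prov (Imp r s) -> prov (Imp p (Imp q s)).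
Proof.
move=> pqr rs; apply: imp_mp pqr; apply: imp_weaken.
exact: r_MP (ax_S _ _ _ _) (imp_weaken q rs).
Qed.

Lemma or_imp p q r : prov (Imp p r) -> prov (Imp q r) -> prov (Imp (Or p q) r).
Proof. by move=> pr qr; apply: r_MP (r_MP (ax_orE _ _ _ _) pr) qr. Qed.

Lemma box_of_knows M p : prov (Imp (kn CM M) p) -> prov (Box M p).
Proof.
move=> kp; have boxed := r_MP (ax_M4 _ M _) kp.
exact: r_MP (r_MP (ax_MK _ _ _ _) boxed) (ax_Mk _ _).
Qed.

Lemma or_box_of_or M p q : prov (Imp (Or p q) (Or (Box M p) (Box M q))).
Proof.
apply: or_imp.
- exact: imp_trans (ax_M4 _ _ _) (ax_orI1 _ _ _).
- exact: imp_trans (ax_M4 _ _ _) (ax_orI2 _ _ _).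
Qed.

End Hilbert.

Theorem theorem2p41 (A : finType) (CM : A) (B : Type)
  (M : msg A B) (phi psi : form A B) :
  LIiP CM (Box M (Imp (Box M (Or phi psi)) (Or (Box M phi) (Box M psi)))).
Proof.
apply: box_of_knows; apply: imp_swap.
exact: imp2_trans (ax_MT _ _ _) (or_box_of_or _ CM M phi psi).
Qed.
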